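(* Let $Y$ be a discrete random variable taking values in a set $\mathcal{Y}$, and let $B=(B_0,\dots,B_{m-1})$ be a random vector taking values in $\{0,1\}^m$. Assume $\mathbf{H}(Y\mid B)=0$ and that the components of $B$ are independent conditionally on $Y$. For $y_n\in\mathcal{Y}$ with $P(Y=y_n)>0$, let $\mathcal{B}_n=\{b\in\{0,1\}^m : P(B=b\mid Y=y_n)\neq 0\}$, let $\mathcal{B}=\bigcup_{y_n:\,P(Y=y_n)>0}\mathcal{B}_n$, define $\varphi^{(n)}\in\{-1,0,1\}^m$ by $\varphi^{(n)}_i=0$ if $P(B_i=1\mid Y=y_n)\in(0,1)$, $\varphi^{(n)}_i=-1$ if $P(B_i=1\mid Y=y_n)=0$, $\varphi^{(n)}_i=1$ if $P(B_i=1\mid Y=y_n)=1$, and define $\mu^{(n)}\in\mathbb{R}^{m+1}$ by $\mu^{(n)}_i=2\varphi^{(n)}_i$ for $0\le i<m$ and $\mu^{(n)}_m=1-\sum_{i=0}^{m-1}\big[(\varphi^{(n)}_i)^2+\varphi^{(n)}_i\big]$. Then for every $y_n$ with $P(Y=y_n)>0$ and every $b\in\mathcal{B}$: if $b\in\mathcal{B}_n$ then $(b_0,\dots,b_{m-1},1)\cdot\mu^{(n)}>0$, and if $b\notin\mathcal{B}_n$ then $(b_0,\dots,b_{m-1},1)\cdot\mu^{(n)}<0$.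
   Context: $\mathbf{H}(Y\mid B)$ is the conditional Shannon entropy; conditional independence of the components means $P(B=b\mid Y=y)=\prod_i P(B_i=b_i\mid Y=y)$ for all $b$ and all $y$ with $P(Y=y)>0$. The dot denotes the standard inner product on $\mathbb{R}^{m+1}$. *)

From HB Require Import structures.
From mathcomp Require Import all_boot all_order all_algebra.
From mathcomp Require Import classical_sets boolp reals ereal esum exp.
Set Implicit Arguments. Unset Strict Implicit. Unset Printing Implicit Defensive.
Import Order.TTheory GRing.Theory Num.Theory.
Local Open Scope ring_scope.
Local Open Scope classical_set_scope.

Notation bvec m := {ffun 'I_m -> bool}.

Section Prob.
Variables (R : realType) (Ty : choiceType) (m : nat).
(* pj y b = P(Y = y, B = b): the joint probability mass function of (Y,B).
   Y is discrete (countable support allowed, Ty is an arbitrary choiceType). *)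
Variable pj : Ty -> bvec m -> R.

Definition pY (y : Ty) : R := \sum_(b : bvec m) pj y b.
Definition pB (b : bvec m) : R := fine (\esum_(y in [set: Ty]) (pj y b)%:E).

Definition is_joint_pmf : Prop :=
  (forall y b, 0 <= pj y b) /\ \esum_(y in [set: Ty]) (pY y)%:E = 1%E.

Definition condB (y : Ty) (b : bvec m) : R := pj y b / pY y.
Definition condBi1 (y : Ty) (i : 'I_m) : R :=
  (\sum_(b : bvec m | b i) pj y b) / pY y.
Definition condBi (y : Ty) (i : 'I_m) (c : bool) : R :=
  (\sum_(b : bvec m | b i == c) pj y b) / pY y.

Definition cond_indep : Prop :=
  forall y, 0 < pY y -> forall b : bvec m,
    condB y b = \prod_(i < m) condBi y i (b i).

(* Conditional Shannon entropy H(Y|B) = - sum_{y,b} P(y,b) log (P(y,b)/P(b)),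
   with 0 log 0 = 0 (natural log; the base is irrelevant for H = 0).
   Every summand is nonnegative, so the (extended-real) series is well defined. *)
Definition cond_entropy : \bar R :=
  (\sum_(b : bvec m) \esum_(y in [set: Ty])
     (if pj y b == 0 then 0 else - (pj y b * ln (pj y b / pB b)))%:E)%E.

Definition phi (y : Ty) (i : 'I_m) : R :=
  if condBi1 y i == 0 then -1 else if condBi1 y i == 1 then 1 else 0.

Definition mu (y : Ty) (k : 'I_(m + 1)) : R :=
  match split k with
  | inl i => 2 * phi y i
  | inr _ => 1 - \sum_(i < m) (phi y i ^+ 2 + phi y i)
  end.

Definition ext1 (b : bvec m) (k : 'I_(m + 1)) : R :=
  match split k with
  | inl i => (b i)%:R
  | inr _ => 1
  end.

Definition dotR (u v : 'I_(m + 1) -> R) : R := \sum_(k < m + 1) u k * v k.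

Definition Bset (y : Ty) (b : bvec m) : Prop := condB y b != 0.
Definition Ball (b : bvec m) : Prop := exists y, 0 < pY y /\ Bset y b.

End Prob.

From HB Require Import structures.
From mathcomp Require Import all_boot all_order all_algebra.
From mathcomp Require Import classical_sets boolp reals ereal esum exp.
From mathcomp Require Import lra.
Set Implicit Arguments. Unset Strict Implicit. Unset Printing Implicit Defensive.
Import Order.TTheory GRing.Theory Num.Theory.
Local Open Scope ring_scope.

(* Write the dot product as 1 + sum_i t_i with t_i = 2 b_i phi_i - phi_i^2 - phi_i.
   A case check on phi_i shows that t_i = -2 when P(B_i = b_i | Y = y_n) = 0 and
   t_i = 0 otherwise, so the dot product is 1 - 2k, where k counts the coordinates
   i with P(B_i = b_i | Y = y_n) = 0.  By conditional independence,
   P(B = b | Y = y_n) is the product of these coordinate probabilities, hence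
   b lies in B_n exactly when k = 0. *)

Definition sign_code {R : numDomainType} (p : R) : R :=
  if p == 0 then -1 else if p == 1 then 1 else 0.

Lemma sign_code_term (R : realFieldType) (p : R) (c : bool) :
  let f := sign_code p in
  2 * c%:R * f - (f ^+ 2 + f) = if (if c then p else 1 - p) == 0 then -2 else 0.
Proof.
rewrite /sign_code.
have [->|p_neq0] := eqP; first by case: c; rewrite /= ?subr0 ?oner_eq0 ?eqxx; lra.
have [->|p_neq1] := eqP; first by case: c; rewrite /= ?subrr ?oner_eq0 ?eqxx; lra.
have p1_neq0 : 1 - p != 0 by rewrite subr_eq0 eq_sym; apply/eqP.
by case: c; rewrite /= ?(negPf p1_neq0) ?(introF eqP p_neq0); lra.
Qed.

Section SignPattern.
Variables (R : realType) (Ty : choiceType) (m : nat).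
Variable pj : Ty -> bvec m -> R.

Definition null_coords (y : Ty) (b : bvec m) : {set 'I_m} :=
  [set i | condBi pj y i (b i) == 0].

Lemma dotR_ext1_mu y b : dotR (ext1 R b) (mu pj y) =
  1 + \sum_(i < m) (2 * (b i)%:R * phi pj y i - (phi pj y i ^+ 2 + phi pj y i)).
Proof.
rewrite /dotR big_split_ord big_ord1 /= big_split sumrN /= [RHS]addrCA.
rewrite /ext1 /mu (unsplitK (inr _ ord0)) mul1r; congr (_ + _).
by apply: eq_bigr => i _; rewrite (unsplitK (inl _ i)) mulrCA mulrA.
Qed.

Lemma condBi_true y i : condBi pj y i true = condBi1 pj y i.
Proof. by rewrite /condBi /condBi1; congr (_ / _); apply: eq_bigl => b; rewrite eqb_id. Qed.

Lemma condBi_false y i : 0 < pY pj y -> condBi pj y i false = 1 - condBi1 pj y i.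
Proof.
move=> pY_gt0; rewrite /condBi /condBi1 -(divff (lt0r_neq0 pY_gt0)) -mulrBl.
congr (_ / _); apply/eqP; rewrite eq_sym subr_eq addrC /pY.
rewrite (bigID (fun b : bvec m => b i)) /=; apply/eqP; congr (_ + _).
by apply: eq_bigl => b; rewrite eqbF_neg.
Qed.

Lemma dotR_ext1_mu_null_coords y b : 0 < pY pj y ->
  dotR (ext1 R b) (mu pj y) = 1 - 2 * #|null_coords y b|%:R.
Proof.
move=> pY_gt0; rewrite dotR_ext1_mu.
have term_eq i : 2 * (b i)%:R * phi pj y i - (phi pj y i ^+ 2 + phi pj y i)
    = if condBi pj y i (b i) == 0 then -2 else 0.
  rewrite (@sign_code_term _ (condBi1 pj y i)).
  by case: (b i); rewrite ?condBi_true ?condBi_false.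
under eq_bigr => i _ do rewrite term_eq.
by rewrite -big_mkcond /= sumr_const /null_coords cardsE mulNrn mulr_natr.
Qed.

Lemma Bset_null_coords y b : cond_indep pj -> 0 < pY pj y ->
  Bset pj y b <-> #|null_coords y b| = 0%N.
Proof.
move=> indep pY_gt0; rewrite /Bset (indep y pY_gt0 b).
split=> [/prodf_neq0 nz | /card0_eq null0].
  by apply: eq_card0 => i; rewrite inE (negPf (nz i isT)).
by apply/prodf_neq0 => i _; have := null0 i; rewrite inE => ->.
Qed.

End SignPattern.

Theorem lemma6 (R : realType) (Ty : choiceType) (m : nat)
    (pj : Ty -> {ffun 'I_m -> bool} -> R) :
  is_joint_pmf pj ->
  cond_entropy pj = 0%E ->
  cond_indep pj ->
  forall (yn : Ty), 0 < pY pj yn ->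
  forall b : {ffun 'I_m -> bool}, Ball pj b ->
    (Bset pj yn b -> 0 < dotR (ext1 R b) (mu pj yn)) /\
    (~ Bset pj yn b -> dotR (ext1 R b) (mu pj yn) < 0).
Proof.
move=> _ _ indep yn pYn_gt0 b _.
rewrite (dotR_ext1_mu_null_coords b pYn_gt0) (Bset_null_coords b indep pYn_gt0).
case: #|_| => [|k].
  by split=> [_|//]; rewrite mulr0 subr0 ltr01.
split=> [//|_]; rewrite -[k.+1%:R]natr1.
by have := ler0n R k; lra.
Qed.
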